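(* Let $d\ge2$ be an integer. For $\lambda\in(0,1)$ let $\bar F_{R,\lambda}$ be the solution of $\bar F'(w)=\lambda\bar F(w)^d-\bar F(w)$ with $\bar F(0)=1$, and let $\mathbb E[R_\lambda]=\int_0^\infty\bar F_{R,\lambda}(w)\,dw$. Then $$\lim_{\lambda\to1^-}-\frac{\mathbb E[R_\lambda]}{\log(1-\lambda)}=\frac1{d-1}.$$
   Context: $\bar F_{R,\lambda}$ is the ccdf of the limiting response time under the Red($d$) policy with i.i.d. exponential(1) replicas. *)

From Stdlib Require Import Reals.
From Coquelicot Require Import Coquelicot.
Open Scope R_scope.

Definition red_ccdf_solution (d : nat) (lam : R) (Fbar : R -> R) : Prop :=
  Fbar 0 = 1 /\
  filterlim Fbar (at_right 0) (locally 1) /\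
  (forall w, 0 < w -> is_derive Fbar w (lam * Fbar w ^ d - Fbar w)).

(* Write k = d - 1 >= 1.  The ODE  F' = lam F^d - F,  F(0+) = 1  is a Bernoulli
   equation with the explicit solution
        red_profile k lam w = (lam + (1 - lam) e^(k w))^(-1/k),
   which is 1 up to the "knee"  w0 = -ln(1 - lam)/k  and decays like e^(w0 - w)
   afterwards.  The proof has three parts:
   1. the profile solves the ODE and satisfies  1 - (1-lam) e^(k w) <= G <= 1  and
      G(w) <= e^(w0 - w); integrating these bounds (together with a general lemma
      producing the improper integral of a nonnegative function with bounded
      partial integrals) gives  |E[R_lam] - w0| <= 1;
   2. any solution with F(0+) = 1 coincides with the profile on (0, +oo): the
      squared gap between two solutions grows at most exponentially (Gronwall
      argument through the mean value theorem) and vanishes at 0+;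
   3. since -ln(1 - lam) -> +oo, a quantity within bounded distance of w0,
      divided by -ln(1 - lam), tends to 1/k. *)

From Stdlib Require Import Reals Lra Lia Classical.
From Coquelicot Require Import Coquelicot.
Open Scope R_scope.

Lemma exp_le_exp (x y : R) : x <= y -> exp x <= exp y.
Proof.
  intros Hxy. destruct (Rle_lt_or_eq_dec _ _ Hxy) as [Hlt | ->].
  - left; apply exp_increasing, Hlt.
  - apply Rle_refl.
Qed.

Lemma exp_pow_INR (x : R) (n : nat) : exp x ^ n = exp (INR n * x).
Proof.
  induction n as [|n IH].
  - simpl; rewrite Rmult_0_l, exp_0; reflexivity.
  - rewrite S_INR; simpl pow; rewrite IH, <- exp_plus; f_equal; ring.
Qed.

Lemma continuity_pt_of_derive (f : R -> R) (x l : R) :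
  is_derive f x l -> continuity_pt f x.
Proof.
  intros Hd; apply continuity_pt_filterlim.
  apply (ex_derive_continuous (K := R_AbsRing) (V := R_NormedModule)).
  exists l; exact Hd.
Qed.

Definition red_base (k lam w : R) : R := lam + (1 - lam) * exp (k * w).

(* The explicit solution  (lam + (1 - lam) e^(k w))^(-1/k)  of  G' = lam G^(k+1) - G. *)
Definition red_profile (k lam w : R) : R := exp (- ln (red_base k lam w) / k).

(* The knee  -ln(1 - lam)/k  of the profile: the mean response time up to O(1). *)
Definition red_knee (k lam : R) : R := - ln (1 - lam) / k.

Section Profile.

Variables (k lam : R).
Hypothesis Hlam : 0 < lam < 1.

Lemma red_base_pos (w : R) : 0 < red_base k lam w.
Proof. unfold red_base; pose proof (exp_pos (k * w)); nra. Qed.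

Lemma red_base_ge_1 (w : R) : 0 <= k -> 0 <= w -> 1 <= red_base k lam w.
Proof.
  intros Hk Hw; unfold red_base.
  assert (1 <= exp (k * w)) by (rewrite <- exp_0; apply exp_le_exp; nra).
  nra.
Qed.

Lemma red_profile_at_0 : k <> 0 -> red_profile k lam 0 = 1.
Proof.
  intros Hk; unfold red_profile, red_base.
  rewrite Rmult_0_r, exp_0, Rmult_1_r.
  replace (lam + (1 - lam)) with 1 by ring.
  rewrite ln_1; replace (- 0 / k) with 0 by (field; exact Hk); apply exp_0.
Qed.

Lemma red_profile_pos (w : R) : 0 < red_profile k lam w.
Proof. apply exp_pos. Qed.

Lemma red_profile_le_1 (w : R) : 0 < k -> 0 <= w -> red_profile k lam w <= 1.
Proof.
  intros Hk Hw; unfold red_profile; rewrite <- exp_0; apply exp_le_exp.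
  assert (0 <= ln (red_base k lam w)).
  { rewrite <- ln_1; apply ln_le; [lra | apply red_base_ge_1; lra]. }
  unfold Rdiv; assert (0 < / k) by (apply Rinv_0_lt_compat; lra); nra.
Qed.

(* Upper bound used after the knee: since the base is at least (1 - lam) e^(k w),
   the profile is at most e^(w0 - w). *)
Lemma red_profile_le_decay (w : R) : 0 < k ->
  red_profile k lam w <= exp (red_knee k lam - w).
Proof.
  intros Hk; unfold red_profile, red_knee; apply exp_le_exp.
  assert (Hln : ln (1 - lam) + k * w <= ln (red_base k lam w)).
  { rewrite <- (ln_exp (k * w)), <- ln_mult by (lra || apply exp_pos).
    apply ln_le; unfold red_base; pose proof (exp_pos (k * w)); nra. }
  replace (- ln (1 - lam) / k - w) with ((- ln (1 - lam) - k * w) * / k)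
    by (field; lra).
  unfold Rdiv; apply Rmult_le_compat_r; [left; apply Rinv_0_lt_compat|]; lra.
Qed.

(* Lower bound used before the knee: with v the base, v^(-1/k) >= 1/v >= 2 - v
   when k >= 1 and v >= 1. *)
Lemma red_profile_ge_linear (w : R) : 1 <= k -> 0 <= w ->
  1 - (1 - lam) * exp (k * w) <= red_profile k lam w.
Proof.
  intros Hk Hw; unfold red_profile.
  set (v := red_base k lam w).
  assert (Hv : 1 <= v) by (apply red_base_ge_1; lra).
  assert (Hln : 0 <= ln v) by (rewrite <- ln_1; apply ln_le; lra).
  assert (Hinv : / v <= exp (- ln v / k)).
  { rewrite <- (exp_ln v), <- exp_Ropp, ln_exp by lra; apply exp_le_exp.
    assert (ln v / k <= ln v).
    { unfold Rdiv; rewrite <- (Rmult_1_r (ln v)) at 2.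
      apply Rmult_le_compat_l; [lra|].
      rewrite <- Rinv_1; apply Rinv_le_contravar; lra. }
    unfold Rdiv in *; lra. }
  assert (2 - v <= / v).
  { apply (Rmult_le_reg_r v); [lra|]; rewrite Rinv_l by lra; nra. }
  unfold v, red_base in *; lra.
Qed.

End Profile.

Lemma red_profile_pow (kn : nat) (lam w : R) : (1 <= kn)%nat -> 0 < lam < 1 ->
  red_profile (INR kn) lam w ^ kn = / red_base (INR kn) lam w.
Proof.
  intros Hkn Hlam; unfold red_profile; rewrite exp_pow_INR.
  assert (0 < INR kn) by (apply lt_0_INR; lia).
  replace (INR kn * (- ln (red_base (INR kn) lam w) / INR kn))
    with (- ln (red_base (INR kn) lam w)) by (field; lra).
  rewrite exp_Ropp, exp_ln; [reflexivity | apply red_base_pos, Hlam].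
Qed.

Lemma red_profile_derive (kn : nat) (lam w : R) : (1 <= kn)%nat -> 0 < lam < 1 ->
  is_derive (red_profile (INR kn) lam) w
    (lam * red_profile (INR kn) lam w ^ S kn - red_profile (INR kn) lam w).
Proof.
  intros Hkn Hlam.
  assert (0 < INR kn) by (apply lt_0_INR; lia).
  pose proof (red_base_pos (INR kn) lam Hlam w) as Hv.
  rewrite <- tech_pow_Rmult, (red_profile_pow kn lam w Hkn Hlam).
  unfold red_profile, red_base in *; auto_derive.
  - lra.
  - set (v := lam + (1 - lam) * exp (INR kn * w)) in *.
    replace ((1 - lam) * (INR kn * 1 * exp (INR kn * w))) with (INR kn * (v - lam))
      by (unfold v; ring).
    unfold Rdiv; set (E := exp (- ln v * / INR kn)).
    field; lra.
Qed.

Lemma red_profile_continuous (k lam w : R) : k <> 0 -> 0 < lam < 1 ->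
  continuous (red_profile k lam) w.
Proof.
  intros Hk Hlam.
  apply (ex_derive_continuous (K := R_AbsRing) (V := R_NormedModule)).
  pose proof (red_base_pos k lam Hlam w) as Hv.
  unfold red_profile, red_base in *; auto_derive; tauto.
Qed.

(* A continuous nonnegative function on [a, +oo) whose partial integrals are bounded
   by M has an improper integral L <= M dominating every partial integral; L is the
   supremum of the partial integrals, which increase with the upper bound. *)
Lemma improper_integral_of_bounded_nonneg (f : R -> R) (a M : R) :
  (forall x, a <= x -> continuous f x) ->
  (forall x, a <= x -> 0 <= f x) ->
  (forall b, a <= b -> RInt f a b <= M) ->
  exists L, is_RInt_gen f (at_point a) (Rbar_locally p_infty) L /\
    L <= M /\ (forall b, a <= b -> RInt f a b <= L).
Proof.
  intros Hcont Hpos Hbound.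
  assert (Hex : forall b1 b2, a <= b1 <= b2 -> ex_RInt f b1 b2).
  { intros b1 b2 Hb; apply (ex_RInt_continuous (V := R_CompleteNormedModule)); intros z Hz.
    rewrite Rmin_left in Hz by lra; apply Hcont; lra. }
  assert (Hmono : forall b1 b2, a <= b1 <= b2 -> RInt f a b1 <= RInt f a b2).
  { intros b1 b2 Hb.
    rewrite <- (RInt_Chasles f a b1 b2) by (apply Hex; lra).
    assert (0 <= RInt f b1 b2).
    { apply RInt_ge_0; [lra | apply Hex; lra | intros; apply Hpos; lra]. }
    change (plus (RInt f a b1) (RInt f b1 b2)) with (RInt f a b1 + RInt f b1 b2).
    lra. }
  set (E := fun y => exists b, a <= b /\ y = RInt f a b).
  destruct (completeness E) as [L [HLup HLleast]].
  - exists M; intros y [b [Hb ->]]; apply Hbound, Hb.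
  - exists (RInt f a a), a; split; [lra | reflexivity].
  - assert (Hbelow : forall b, a <= b -> RInt f a b <= L).
    { intros b Hb; apply HLup; exists b; split; [exact Hb | reflexivity]. }
    exists L; split; [| split; [| exact Hbelow]].
    + intros P [eps HP].
      assert (Hnear : exists b0, a <= b0 /\ L - eps < RInt f a b0).
      { apply NNPP; intros Hfar; pose proof (cond_pos eps).
        enough (L <= L - eps) by lra.
        apply HLleast; intros y [b [Hb ->]].
        apply Rnot_lt_le; intros Hlt; apply Hfar; exists b; split; assumption. }
      destruct Hnear as [b0 [Hb0 Hb0L]].
      apply (Filter_prod _ _ _ (fun x => x = a) (fun b => b0 < b));
        [reflexivity | exists b0; tauto |].
      intros x b -> Hb; exists (RInt f a b); split.
      * apply (RInt_correct (V := R_CompleteNormedModule)), Hex; lra.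
      * apply HP; change (Rabs (RInt f a b - L) < eps).
        pose proof (Hbelow b ltac:(lra)); pose proof (Hmono b0 b ltac:(lra)).
        rewrite Rabs_left1; lra.
    + apply HLleast; intros y [b [Hb ->]]; apply Hbound, Hb.
Qed.

Lemma RInt_le_length (f : R -> R) (a b : R) : a <= b -> ex_RInt f a b ->
  (forall x, a < x < b -> f x <= 1) -> RInt f a b <= b - a.
Proof.
  intros Hab Hex Hf.
  apply Rle_trans with (RInt (fun _ => 1) a b).
  - apply RInt_le; [exact Hab | exact Hex | apply ex_RInt_const | exact Hf].
  - rewrite RInt_const; change (scal (b - a) 1) with ((b - a) * 1); lra.
Qed.

(* The tail  int_c^b e^(c - x) dx = 1 - e^(c - b)  is at most 1. *)
Lemma RInt_exp_decay_le_1 (c b : R) : c <= b -> RInt (fun x => exp (c - x)) c b <= 1.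
Proof.
  intros Hcb.
  assert (Hint : is_RInt (fun x => exp (c - x)) c b
                   (minus (- exp (c - b)) (- exp (c - c)))).
  { apply (is_RInt_derive (V := R_CompleteNormedModule) (fun x => - exp (c - x))).
    - intros x _; auto_derive; [exact I | unfold Rminus; ring].
    - intros x _; apply (ex_derive_continuous (K := R_AbsRing) (V := R_NormedModule)).
      auto_derive; exact I. }
  rewrite (is_RInt_unique _ _ _ _ Hint).
  change (minus (- exp (c - b)) (- exp (c - c))) with (- exp (c - b) - - exp (c - c)).
  rewrite Rminus_diag, exp_0; pose proof (exp_pos (c - b)); lra.
Qed.

Section ProfileMean.

Variables (k lam : R).
Hypotheses (Hk : 1 <= k) (Hlam : 0 < lam < 1).

Lemma red_knee_pos : 0 < red_knee k lam.
Proof.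
  unfold red_knee.
  assert (ln (1 - lam) < 0) by (rewrite <- ln_1; apply ln_increasing; lra).
  apply Rdiv_lt_0_compat; lra.
Qed.

Lemma ex_RInt_red_profile (a b : R) : ex_RInt (red_profile k lam) a b.
Proof.
  apply (ex_RInt_continuous (V := R_CompleteNormedModule)); intros z _.
  apply red_profile_continuous; lra.
Qed.

(* Partial integrals are at most w0 + 1: the profile is at most 1 on [0, w0] and at
   most e^(w0 - w) beyond. *)
Lemma red_profile_partial_integral_le (b : R) : 0 <= b ->
  RInt (red_profile k lam) 0 b <= red_knee k lam + 1.
Proof.
  intros Hb; pose proof red_knee_pos as Hc; set (c := red_knee k lam) in *.
  destruct (Rle_lt_dec b c) as [Hbc | Hcb].
  - assert (RInt (red_profile k lam) 0 b <= b - 0).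
    { apply RInt_le_length; [lra | apply ex_RInt_red_profile |].
      intros x Hx; apply red_profile_le_1; lra. }
    lra.
  - rewrite <- (RInt_Chasles _ 0 c b) by apply ex_RInt_red_profile.
    change (plus ?u ?v) with (u + v).
    assert (RInt (red_profile k lam) 0 c <= c - 0).
    { apply RInt_le_length; [lra | apply ex_RInt_red_profile |].
      intros x Hx; apply red_profile_le_1; lra. }
    assert (RInt (red_profile k lam) c b <= RInt (fun x => exp (c - x)) c b).
    { apply RInt_le; [lra | apply ex_RInt_red_profile | |].
      - apply (ex_RInt_continuous (V := R_CompleteNormedModule)); intros z _.
        apply (ex_derive_continuous (K := R_AbsRing) (V := R_NormedModule)).
        auto_derive; exact I.
      - intros x _; apply red_profile_le_decay; lra. }
    pose proof (RInt_exp_decay_le_1 c b ltac:(lra)); lra.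
Qed.

(* The integral up to the knee is at least w0 - 1, by integrating the lower bound
   1 - (1 - lam) e^(k x), whose integral over [0, w0] is w0 - lam/k. *)
Lemma red_profile_integral_to_knee_ge :
  red_knee k lam - 1 <= RInt (red_profile k lam) 0 (red_knee k lam).
Proof.
  pose proof red_knee_pos as Hc; set (c := red_knee k lam) in *; set (mu := 1 - lam).
  assert (Hint : is_RInt (fun x => 1 - mu * exp (k * x)) 0 c
                   (minus (c - mu * exp (k * c) / k) (0 - mu * exp (k * 0) / k))).
  { apply (is_RInt_derive (V := R_CompleteNormedModule) (fun x => x - mu * exp (k * x) / k)).
    - intros x _; auto_derive; [exact I | field; lra].
    - intros x _; apply (ex_derive_continuous (K := R_AbsRing) (V := R_NormedModule)).
      auto_derive; exact I. }
  assert (Hle : RInt (fun x => 1 - mu * exp (k * x)) 0 c <= RInt (red_profile k lam) 0 c).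
  { apply RInt_le; [lra | eexists; exact Hint | apply ex_RInt_red_profile |].
    intros x Hx; apply red_profile_ge_linear; lra. }
  rewrite (is_RInt_unique _ _ _ _ Hint) in Hle.
  change (minus ?u ?v) with (u - v) in Hle.
  assert (Hkc : mu * exp (k * c) = 1).
  { replace (k * c) with (- ln mu) by (unfold c, red_knee, mu; field; lra).
    rewrite exp_Ropp, exp_ln by (unfold mu; lra); field; unfold mu; lra. }
  rewrite Rmult_0_r, exp_0, !Rmult_1_r in Hle.
  assert (1 / k <= 1).
  { unfold Rdiv; rewrite Rmult_1_l, <- Rinv_1; apply Rinv_le_contravar; lra. }
  assert (0 < mu / k) by (apply Rdiv_lt_0_compat; unfold mu; lra).
  unfold Rdiv in *; rewrite Hkc in Hle; lra.
Qed.

Lemma red_profile_mean : exists L,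
  is_RInt_gen (red_profile k lam) (at_point 0) (Rbar_locally p_infty) L /\
  Rabs (L - red_knee k lam) <= 1.
Proof.
  destruct (improper_integral_of_bounded_nonneg (red_profile k lam) 0 (red_knee k lam + 1))
    as [L [HL [HLup HLlow]]].
  - intros x _; apply red_profile_continuous; lra.
  - intros x _; left; apply red_profile_pos.
  - apply red_profile_partial_integral_le.
  - exists L; split; [exact HL |].
    pose proof (HLlow _ (Rlt_le _ _ red_knee_pos)).
    pose proof red_profile_integral_to_knee_ge.
    apply Rabs_le; lra.
Qed.

End ProfileMean.

Lemma pow_lipschitz (n : nat) (x y B : R) : Rabs x <= B -> Rabs y <= B ->
  Rabs (x ^ S n - y ^ S n) <= INR (S n) * B ^ n * Rabs (x - y).
Proof.
  intros Hx Hy; assert (HB : 0 <= B) by (pose proof (Rabs_pos x); lra).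
  induction n as [|n IH].
  - simpl; rewrite !Rmult_1_r; lra.
  - replace (x ^ S (S n) - y ^ S (S n)) with (x ^ S n * (x - y) + y * (x ^ S n - y ^ S n))
      by (simpl; ring).
    eapply Rle_trans; [apply Rabs_triang | rewrite !Rabs_mult].
    assert (Hxn : Rabs (x ^ S n) <= B ^ S n).
    { rewrite <- RPow_abs; apply pow_incr; split; [apply Rabs_pos | exact Hx]. }
    assert (H1 : Rabs (x ^ S n) * Rabs (x - y) <= B ^ S n * Rabs (x - y))
      by (apply Rmult_le_compat_r; [apply Rabs_pos | exact Hxn]).
    assert (H2 : Rabs y * Rabs (x ^ S n - y ^ S n) <= B * (INR (S n) * B ^ n * Rabs (x - y)))
      by (apply Rmult_le_compat; auto using Rabs_pos).
    assert (0 <= B * B ^ n * Rabs (x - y))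
      by (apply Rmult_le_pos; [apply Rmult_le_pos; [| apply pow_le] | apply Rabs_pos]; lra).
    rewrite S_INR; simpl pow in *; nra.
Qed.

Lemma right_limit_close (f : R -> R) (l r : R) :
  filterlim f (at_right 0) (locally l) -> 0 < r ->
  exists delta, 0 < delta /\ forall x, 0 < x < delta -> Rabs (f x - l) < r.
Proof.
  intros Hf Hr; apply filterlim_locally with (eps := mkposreal r Hr) in Hf.
  destruct Hf as [delta Hdelta]; exists delta; split; [apply cond_pos |].
  intros x Hx; apply Hdelta; [| lra].
  change (Rabs (x - 0) < delta); rewrite Rminus_0_r, Rabs_right; lra.
Qed.

(* A function continuous on (0, w] with a finite right limit at 0 is bounded there:
   near 0 by the limit, on the remaining compact interval by extreme values. *)
Lemma bounded_near_right_limit (f : R -> R) (l w : R) : 0 < w ->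
  (forall x, 0 < x <= w -> continuity_pt f x) ->
  filterlim f (at_right 0) (locally l) ->
  exists B, forall x, 0 < x <= w -> Rabs (f x) <= B.
Proof.
  intros Hw Hcont Hlim.
  destruct (right_limit_close f l 1 Hlim Rlt_0_1) as [delta [Hdelta Hclose]].
  set (a := Rmin (delta / 2) w).
  assert (Ha : 0 < a <= w /\ a < delta).
  { unfold a; split; [split; [apply Rmin_glb_lt | apply Rmin_r] |]; try lra.
    eapply Rle_lt_trans; [apply Rmin_l | lra]. }
  destruct (continuity_ab_maj f a w ltac:(lra) ltac:(intros; apply Hcont; lra))
    as [xM [HM _]].
  destruct (continuity_ab_min f a w ltac:(lra) ltac:(intros; apply Hcont; lra))
    as [xm [Hm _]].
  exists (Rabs l + 1 + Rabs (f xM) + Rabs (f xm)); intros x Hx.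
  pose proof (Rabs_pos (f xM)); pose proof (Rabs_pos (f xm)); pose proof (Rabs_pos l).
  destruct (Rlt_le_dec x a) as [Hxa | Hax].
  - pose proof (Hclose x ltac:(lra)); pose proof (Rabs_triang_inv (f x) l); lra.
  - pose proof (HM x ltac:(lra)); pose proof (Hm x ltac:(lra)).
    pose proof (Rle_abs (f xM)); pose proof (Rle_abs (- f xm)); rewrite Rabs_Ropp in *.
    apply Rabs_le; lra.
Qed.

(* Gronwall estimate: if (F - G)(F' - G') <= K (F - G)^2 on [e, w], then
   (F - G)^2 e^(-2 K x) is nonincreasing there, by the mean value theorem. *)
Lemma squared_gap_gronwall (F G F' G' : R -> R) (K e w : R) : e <= w ->
  (forall x, e <= x <= w -> is_derive F x (F' x)) ->
  (forall x, e <= x <= w -> is_derive G x (G' x)) ->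
  (forall x, e <= x <= w -> (F x - G x) * (F' x - G' x) <= K * (F x - G x) ^ 2) ->
  (F w - G w) ^ 2 <= (F e - G e) ^ 2 * exp (2 * K * (w - e)).
Proof.
  intros Hew HF HG Hgap.
  set (psi := fun x => (F x - G x) ^ 2 * exp (- (2 * K) * x)).
  set (dpsi := fun x => 2 * exp (- (2 * K) * x) *
                        ((F x - G x) * (F' x - G' x) - K * (F x - G x) ^ 2)).
  assert (Hpsi : forall x, e <= x <= w -> is_derive psi x (dpsi x)).
  { intros x Hx; unfold psi.
    replace (dpsi x) with
      (INR 2 * (F' x - G' x) * (F x - G x) ^ 1 * exp (- (2 * K) * x)
       + (F x - G x) ^ 2 * (- (2 * K) * exp (- (2 * K) * x)))
      by (unfold dpsi; simpl; ring).
    apply (is_derive_mult (fun t => (F t - G t) ^ 2) (fun t => exp (- (2 * K) * t)));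
      [| | intros; apply Rmult_comm].
    - apply (is_derive_pow (fun t => F t - G t) 2), (is_derive_minus F G);
        [apply HF | apply HG]; exact Hx.
    - auto_derive; [exact I | ring]. }
  assert (Hdecr : psi w <= psi e).
  { destruct (MVT_gen psi e w dpsi) as [c [Hc Hmvt]].
    - intros x Hx; rewrite Rmin_left, Rmax_right in Hx by lra; apply Hpsi; lra.
    - intros x Hx; rewrite Rmin_left, Rmax_right in Hx by lra.
      apply continuity_pt_of_derive with (dpsi x), Hpsi, Hx.
    - rewrite Rmin_left, Rmax_right in Hc by lra.
      assert (dpsi c <= 0).
      { pose proof (Hgap c Hc); pose proof (exp_pos (- (2 * K) * c)); unfold dpsi; nra. }
      nra. }
  unfold psi in Hdecr.
  replace (exp (2 * K * (w - e))) with (exp (- (2 * K) * e) * exp (2 * K * w))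
    by (rewrite <- exp_plus; f_equal; ring).
  replace ((F w - G w) ^ 2) with ((F w - G w) ^ 2 * exp (- (2 * K) * w) * exp (2 * K * w))
    by (rewrite Rmult_assoc, <- exp_plus;
        replace (- (2 * K) * w + 2 * K * w) with 0 by ring; rewrite exp_0; ring).
  rewrite <- Rmult_assoc; apply Rmult_le_compat_r; [left; apply exp_pos | exact Hdecr].
Qed.

Lemma gap_vanishes_at_right_limit (F G : R -> R) (l D C w : R) : 0 < w ->
  filterlim F (at_right 0) (locally l) -> filterlim G (at_right 0) (locally l) ->
  (forall e, 0 < e <= w -> D <= (F e - G e) ^ 2 * C) -> D <= 0.
Proof.
  intros Hw HF HG Hgap; apply Rnot_lt_le; intros HD.
  destruct (Rle_lt_dec C 0) as [HC | HC].
  - pose proof (Hgap w ltac:(lra)); pose proof (pow2_ge_0 (F w - G w)); nra.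
  - set (r := Rmin 1 (D / (8 * C))).
    assert (Hr : 0 < r <= 1 /\ r <= D / (8 * C)).
    { unfold r; split; [split; [apply Rmin_glb_lt; [lra | apply Rdiv_lt_0_compat; lra]
      | apply Rmin_l] | apply Rmin_r]. }
    destruct (right_limit_close F l r HF ltac:(lra)) as [dF [HdF HFc]].
    destruct (right_limit_close G l r HG ltac:(lra)) as [dG [HdG HGc]].
    set (e := Rmin w (Rmin dF dG) / 2).
    assert (He : 0 < e <= w /\ e < dF /\ e < dG).
    { unfold e; pose proof (Rmin_l w (Rmin dF dG)); pose proof (Rmin_r w (Rmin dF dG)).
      pose proof (Rmin_l dF dG); pose proof (Rmin_r dF dG).
      assert (0 < Rmin w (Rmin dF dG)) by (repeat apply Rmin_glb_lt; lra); lra. }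
    pose proof (Hgap e ltac:(lra)) as Hde.
    pose proof (Rabs_def2 _ _ (HFc e ltac:(lra))).
    pose proof (Rabs_def2 _ _ (HGc e ltac:(lra))).
    assert (Hsq : (F e - G e) ^ 2 <= 4 * r ^ 2) by nra.
    assert (Hr8 : 8 * C * r <= D).
    { destruct Hr as [_ Hr]; apply Rmult_le_compat_l with (r := 8 * C) in Hr; [| lra].
      replace (8 * C * (D / (8 * C))) with D in Hr by (field; lra); lra. }
    nra.
Qed.

(* The right-hand side is Lipschitz on the
   bounded range of the solutions, so the squared gap grows at most exponentially
   from its vanishing value at 0+. *)
Lemma red_ode_unique (n : nat) (lam : R) (F G : R -> R) (w : R) : 0 < lam ->
  (forall x, 0 < x -> is_derive F x (lam * F x ^ S n - F x)) ->
  (forall x, 0 < x -> is_derive G x (lam * G x ^ S n - G x)) ->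
  filterlim F (at_right 0) (locally 1) ->
  filterlim G (at_right 0) (locally 1) ->
  (forall x, 0 < x -> Rabs (G x) <= 1) ->
  0 < w -> F w = G w.
Proof.
  intros Hlam HF HG HF0 HG0 HGb Hw.
  destruct (bounded_near_right_limit F 1 w Hw) as [B0 HB0]; [| exact HF0 |].
  { intros x Hx; apply continuity_pt_of_derive with (lam * F x ^ S n - F x), HF; lra. }
  set (B := Rmax B0 1).
  assert (HFB : forall x, 0 < x <= w -> Rabs (F x) <= B)
    by (intros x Hx; eapply Rle_trans; [apply HB0, Hx | apply Rmax_l]).
  assert (HGB : forall x, 0 < x <= w -> Rabs (G x) <= B)
    by (intros x Hx; eapply Rle_trans; [apply HGb; lra | apply Rmax_r]).
  set (K := lam * (INR (S n) * B ^ n)).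
  assert (HK : 0 <= K).
  { apply Rmult_le_pos; [lra | apply Rmult_le_pos; [apply pos_INR | apply pow_le]].
    pose proof (Rmax_r B0 1); unfold B; lra. }
  assert (Hlip : forall x, 0 < x <= w ->
            (F x - G x) * ((lam * F x ^ S n - F x) - (lam * G x ^ S n - G x))
            <= K * (F x - G x) ^ 2).
  { intros x Hx; set (D := F x - G x); set (P := F x ^ S n - G x ^ S n).
    assert (HP : Rabs P <= INR (S n) * B ^ n * Rabs D) by (apply pow_lipschitz; auto).
    assert (HDP : D * P <= INR (S n) * B ^ n * D ^ 2).
    { eapply Rle_trans; [apply Rle_abs |]; rewrite Rabs_mult.
      replace (D ^ 2) with (Rabs D * Rabs D) by (rewrite <- Rabs_mult, Rabs_pos_eq; nra).
      pose proof (Rabs_pos D); nra. }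
    replace ((lam * F x ^ S n - F x) - (lam * G x ^ S n - G x)) with (lam * P - D)
      by (unfold P, D; ring).
    unfold K; pose proof (pow2_ge_0 D); nra. }
  assert (Hgap : forall e, 0 < e <= w ->
            (F w - G w) ^ 2 <= (F e - G e) ^ 2 * exp (2 * K * w)).
  { intros e He; eapply Rle_trans.
    - apply (squared_gap_gronwall F G (fun x => lam * F x ^ S n - F x)
               (fun x => lam * G x ^ S n - G x) K e w); [lra | | |].
      + intros x Hx; apply HF; lra.
      + intros x Hx; apply HG; lra.
      + intros x Hx; apply Hlip; lra.
    - apply Rmult_le_compat_l; [apply pow2_ge_0 | apply exp_le_exp; nra]. }
  pose proof (gap_vanishes_at_right_limit F G 1 _ _ w Hw HF0 HG0 Hgap).
  pose proof (pow2_ge_0 (F w - G w)).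
  nra.
Qed.

Lemma red_solution_is_profile (kn : nat) (lam : R) (F : R -> R) :
  (1 <= kn)%nat -> 0 < lam < 1 -> red_ccdf_solution (S kn) lam F ->
  forall w, 0 < w -> F w = red_profile (INR kn) lam w.
Proof.
  intros Hkn Hlam [_ [HF0 HFd]] w Hw.
  assert (Hk : 1 <= INR kn) by (apply (le_INR 1); exact Hkn).
  apply (red_ode_unique kn lam); [lra | exact HFd | | exact HF0 | | | exact Hw].
  - intros x _; apply red_profile_derive; assumption.
  - apply (filterlim_filter_le_1 (F := locally 0)); [apply filter_le_within |].
    rewrite <- (red_profile_at_0 (INR kn) lam) by lra.
    apply red_profile_continuous; lra.
  - intros x Hx; rewrite Rabs_pos_eq by (left; apply red_profile_pos).
    apply red_profile_le_1; lra.
Qed.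

Lemma red_solution_mean (kn : nat) (lam : R) (F : R -> R) :
  (1 <= kn)%nat -> 0 < lam < 1 -> red_ccdf_solution (S kn) lam F ->
  exists L, is_RInt_gen F (at_point 0) (Rbar_locally p_infty) L /\
    Rabs (L - red_knee (INR kn) lam) <= 1.
Proof.
  intros Hkn Hlam HF.
  destruct (red_profile_mean (INR kn) lam) as [L [HL Hbound]];
    [apply (le_INR 1), Hkn | exact Hlam |].
  exists L; split; [| exact Hbound].
  apply (is_RInt_gen_ext (red_profile (INR kn) lam)); [| exact HL].
  apply (Filter_prod _ _ _ (fun a => a = 0) (fun b => 0 < b));
    [reflexivity | exists 0; tauto |].
  intros a b -> Hb x Hx; simpl in Hx; rewrite Rmin_left, Rmax_right in Hx by lra.
  symmetry; apply (red_solution_is_profile kn lam F); [exact Hkn | exact Hlam | exact HF | lra].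
Qed.

Lemma log_ratio_limit (E : R -> R) (k C : R) : 0 < k ->
  (forall lam, 0 < lam < 1 -> Rabs (E lam - red_knee k lam) <= C) ->
  filterlim (fun lam => - E lam / ln (1 - lam)) (at_left 1) (locally (1 / k)).
Proof.
  intros Hk HE; apply filterlim_locally; intros eps.
  pose proof (cond_pos eps) as Heps.
  set (C' := Rabs C + 1).
  assert (HC' : 0 < C') by (unfold C'; pose proof (Rabs_pos C); lra).
  assert (Hdelta : 0 < Rmin 1 (exp (- (C' / eps)))) by (apply Rmin_glb_lt; [lra | apply exp_pos]).
  exists (mkposreal _ Hdelta); intros lam Hnear Hlt; simpl in Hlt.
  change (Rabs (lam - 1) < Rmin 1 (exp (- (C' / eps)))) in Hnear.
  rewrite Rabs_left in Hnear by lra.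
  pose proof (Rmin_l 1 (exp (- (C' / eps)))); pose proof (Rmin_r 1 (exp (- (C' / eps)))).
  assert (Hlam : 0 < lam < 1) by lra.
  set (m := - ln (1 - lam)).
  assert (Hm : C' / eps < m).
  { enough (ln (1 - lam) < - (C' / eps)) by (unfold m; lra).
    rewrite <- (ln_exp (- (C' / eps))); apply ln_increasing; lra. }
  assert (Hm0 : 0 < m) by (pose proof (Rdiv_lt_0_compat _ _ HC' Heps); lra).
  assert (Hln : ln (1 - lam) < 0) by (unfold m in Hm0; lra).
  assert (HCm : C' < eps * m)
    by (apply Rmult_lt_compat_l with (r := eps) in Hm; [| lra];
        replace (eps * (C' / eps)) with C' in Hm by (field; lra); exact Hm).
  change (Rabs (- E lam / ln (1 - lam) - 1 / k) < eps).
  replace (- E lam / ln (1 - lam) - 1 / k) with ((E lam - red_knee k lam) / m)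
    by (unfold red_knee, m; field; lra).
  unfold Rdiv; rewrite Rabs_mult, Rabs_inv, (Rabs_pos_eq m) by lra.
  pose proof (HE lam Hlam); pose proof (Rle_abs C).
  apply (Rmult_lt_reg_r m); [lra |]; rewrite Rmult_assoc, Rinv_l by lra.
  unfold C' in HCm; lra.
Qed.

Theorem corollary2p4 (d : nat) (Hd : (2 <= d)%nat) (F : R -> R -> R)
  (HF : forall lam, 0 < lam < 1 -> red_ccdf_solution d lam (F lam)) :
  exists ER : R -> R,
    (forall lam, 0 < lam < 1 ->
       is_RInt_gen (F lam) (at_point 0) (Rbar_locally p_infty) (ER lam)) /\
    filterlim (fun lam => - ER lam / ln (1 - lam)) (at_left 1)
      (locally (1 / (INR d - 1))).
Proof.
  destruct d as [| kn]; [lia |].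
  assert (Hkn : (1 <= kn)%nat) by lia.
  set (ER := fun lam => RInt_gen (F lam) (at_point 0) (Rbar_locally p_infty)).
  assert (HER : forall lam, 0 < lam < 1 ->
            is_RInt_gen (F lam) (at_point 0) (Rbar_locally p_infty) (ER lam) /\
            Rabs (ER lam - red_knee (INR kn) lam) <= 1).
  { intros lam Hlam.
    destruct (red_solution_mean kn lam (F lam) Hkn Hlam (HF lam Hlam)) as [L [HL Hbound]].
    unfold ER; rewrite (is_RInt_gen_unique (V := R_CompleteNormedModule) _ _ HL).
    split; assumption. }
  exists ER; split; [intros lam Hlam; apply HER, Hlam |].
  replace (INR (S kn) - 1) with (INR kn) by (rewrite S_INR; ring).
  apply (log_ratio_limit ER (INR kn) 1); [apply lt_0_INR; lia |].
  intros lam Hlam; apply HER, Hlam.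
Qed.
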